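(* Let $\mathcal{H},\mathcal{K}$ be complex Hilbert spaces, let $\Phi:\mathcal{B}(\mathcal{H})\to\mathcal{B}(\mathcal{K})$ be a unital positive linear map, and let $A,B\in\mathcal{B}(\mathcal{H})$ with $A$ positive invertible and $mA\le B\le MA$ for some scalars $0<m<M$. Then $$\Phi(BA^{-1}B)\le\left(\frac{M+m}{2\sqrt{Mm}}\right)^2\Phi(B)\Phi(A)^{-1}\Phi(B).$$
   Context: $\le$ is the Löwner order. A linear map is positive if it maps positive operators to positive operators, and unital if it maps $I$ to $I$. *)

From HB Require Import structures.
From mathcomp Require Import all_boot all_order all_algebra.
From mathcomp Require Import complex.
From mathcomp Require Import reals.
Set Implicit Arguments. Unset Strict Implicit. Unset Printing Implicit Defensive.
Import Order.TTheory GRing.Theory Num.Theory.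
Local Open Scope ring_scope.

Section Hilbert.
Variables (R : realType).
Local Notation C := R[i].
Variable (V : lmodType C).
Variable (ip : V -> V -> C).

Definition hnorm (x : V) : C := sqrtC (ip x x).

Record isHilbert : Prop := IsHilbert {
  ip_linl : forall (a : C) (x y z : V), ip (a *: x + y) z = a * ip x z + ip y z;
  ip_conj : forall x y : V, ip y x = (ip x y)^*;
  ip_ge0 : forall x : V, 0 <= ip x x;
  ip_def : forall x : V, ip x x = 0 -> x = 0;
  ip_complete : forall u : nat -> V,
    (forall e : C, 0 < e -> exists N : nat, forall n k : nat,
        (N <= n)%N -> (N <= k)%N -> hnorm (u n - u k) < e) ->
    exists l : V, forall e : C, 0 < e -> exists N : nat, forall n : nat,
        (N <= n)%N -> hnorm (u n - l) < e
}.

Definition bounded_op (T : V -> V) : Prop :=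
  (forall (a : C) (x y : V), T (a *: x + y) = a *: T x + T y) /\
  (exists K : C, forall x : V, hnorm (T x) <= K * hnorm x).

Definition pos_op (T : V -> V) : Prop := forall x : V, 0 <= ip (T x) x.

Definition loewner_le (S T : V -> V) : Prop := pos_op (fun x => T x - S x).

Definition is_inverse (T Tinv : V -> V) : Prop :=
  bounded_op Tinv /\ (forall x, T (Tinv x) = x) /\ (forall x, Tinv (T x) = x).

Definition op_scale (c : C) (T : V -> V) : V -> V := fun x => c *: T x.

End Hilbert.

Definition unital_pos_linear (R : realType) (V W : lmodType R[i])
    (ipV : V -> V -> R[i]) (ipW : W -> W -> R[i])
    (Phi : (V -> V) -> (W -> W)) : Prop :=
  (forall T, bounded_op ipV T -> bounded_op ipW (Phi T)) /\
  (forall (a : R[i]) S T, bounded_op ipV S -> bounded_op ipV T ->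
     Phi (fun x => a *: S x + T x) = (fun y => a *: Phi S y + Phi T y)) /\
  (forall T, bounded_op ipV T -> pos_op ipV T -> pos_op ipW (Phi T)) /\
  Phi id = id.

Definition cR (R : realType) (x : R) : R[i] := (x%:C)%C.

From HB Require Import structures.
From mathcomp Require Import all_boot all_order all_algebra.
From mathcomp Require Import complex reals.
From mathcomp Require Import ring lra.
From mathcomp Require Import boolp.
Set Implicit Arguments. Unset Strict Implicit. Unset Printing Implicit Defensive.
Import Order.TTheory GRing.Theory Num.Theory.
Local Open Scope ring_scope.

(* Write P = M A - B.  The hypothesis m A <= B <= M A says 0 <= P <= (M - m) A, and the
   Cauchy-Schwarz inequality for the form of P gives P A^-1 P <= (M - m) P; expanding
   B = M A - P this reads B A^-1 B <= (M + m) B - M m A.  Being linear and positive, Phi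
   carries this over: Phi (B A^-1 B) <= (M + m) X - M m Y with X = Phi B and Y = Phi A.
   On the other hand 0 <= (X - s Y) Y^-1 (X - s Y) gives 2 s X - s^2 Y <= X Y^-1 X for every
   real s, and with s = 2 M m / (M + m), multiplied by k = (M + m)^2 / (4 M m), this is
   (M + m) X - M m Y <= k X Y^-1 X.
   Finally Y is invertible: A >= c I with c = 1 / ||A^-1||, hence Y >= c I, and a bounded
   operator that is bounded below in this sense is onto by Banach's fixed point theorem. *)

Local Notation Re := complex.Re.
Local Notation Im := complex.Im.

Section ComplexParts.
Variable R : rcfType.
Implicit Types (x y z : R[i]) (r : R).

Lemma ReD x y : Re (x + y) = Re x + Re y. Proof. by case: x; case: y. Qed.
Lemma ImD x y : Im (x + y) = Im x + Im y. Proof. by case: x; case: y. Qed.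
Lemma ReN x : Re (- x) = - Re x. Proof. by case: x. Qed.
Lemma ImN x : Im (- x) = - Im x. Proof. by case: x. Qed.
Lemma ReB x y : Re (x - y) = Re x - Re y. Proof. by rewrite ReD ReN. Qed.
Lemma ImB x y : Im (x - y) = Im x - Im y. Proof. by rewrite ImD ImN. Qed.
Lemma ReM x y : Re (x * y) = Re x * Re y - Im x * Im y. Proof. by case: x; case: y. Qed.
Lemma ImM x y : Im (x * y) = Re x * Im y + Im x * Re y. Proof. by case: x; case: y. Qed.
Lemma ReJ x : Re x^* = Re x. Proof. by case: x. Qed.
Lemma ImJ x : Im x^* = - Im x. Proof. by case: x. Qed.

Lemma Re_realM r x : Re (r%:C%C * x) = r * Re x.
Proof. by case: x => a b /=; rewrite mul0r subr0. Qed.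

Lemma Im_realM r x : Im (r%:C%C * x) = r * Im x.
Proof. by case: x => a b /=; rewrite mul0r addr0. Qed.

Lemma cge0P z : reflect (Im z = 0 /\ 0 <= Re z) (0 <= z).
Proof. by rewrite lecE; apply: (iffP andP) => -[/eqP ? ?]; split => //; apply/eqP. Qed.

Lemma eq_ReIm x y : Re x = Re y -> Im x = Im y -> x = y.
Proof. by case: x; case: y => /= a b c d -> ->. Qed.

Lemma conj_realC r : (r%:C%C)^* = r%:C%C.
Proof. exact: conjc_real. Qed.

End ComplexParts.

Lemma bernoulli_ineq (R : realDomainType) (h : R) n :
  0 <= h -> 1 + n%:R * h <= (1 + h) ^+ n.
Proof.
move=> h_ge0; elim: n => [|n IHn]; first by rewrite expr0 mul0r addr0.
rewrite exprS -natr1.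
have := mulr_ge0 (mulr_ge0 (ler0n R n) h_ge0) h_ge0.
have := ler_wpM2r (addr_ge0 ler01 h_ge0) IHn.
nra.
Qed.

Lemma exprn_lt_eps (R : archiFieldType) (r eps : R) :
  0 <= r -> r < 1 -> 0 < eps -> exists N, r ^+ N < eps.
Proof.
move=> r_ge0 r_lt1 eps_gt0.
have [->|r_neq0] := eqVneq r 0; first by exists 1%N; rewrite expr1.
have r_gt0 : 0 < r by rewrite lt_neqAle eq_sym r_neq0.
pose h := r^-1 - 1.
have h_gt0 : 0 < h by rewrite /h subr_gt0 invf_gt1.
have b_ge0 : 0 <= (eps * h)^-1 by rewrite invr_ge0 ltW // mulr_gt0.
exists (Num.bound (eps * h)^-1); set n := Num.bound _.
have n_big : 1 < eps * h * n%:R.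
  by rewrite -ltr_pdivrMl ?mulr_gt0 // mulr1; apply: archi_boundP.
have rn_inv : r ^+ n * (1 + h) ^+ n = 1.
  by rewrite -exprMn /h addrC subrK divff ?expr1n ?gt_eqF.
have := ler_wpM2l (exprn_ge0 n r_ge0) (bernoulli_ineq n (ltW h_gt0)).
rewrite rn_inv ltNge => rn_le; apply/negP => eps_le.
have := ler_wpM2r (mulr_ge0 (ler0n R n) (ltW h_gt0)) eps_le.
have := exprn_ge0 n r_ge0; nra.
Qed.

Lemma sqr_le_of_quad_ge0 (R : realFieldType) (a b c : R) : 0 <= c ->
  (forall t, 0 <= a - 2 * t * b + t ^+ 2 * c) -> b ^+ 2 <= a * c.
Proof.
move=> c_ge0 quad_ge0.
have a_ge0 : 0 <= a by have := quad_ge0 0; rewrite expr0n /=; lra.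
have [c0|c_neq0] := eqVneq c 0.
  have [->|b_neq0] := eqVneq b 0; first by rewrite c0 expr0n /= mulr0.
  have := quad_ge0 ((a + 1) / (2 * b)); rewrite c0 mulr0 addr0.
  have -> : 2 * ((a + 1) / (2 * b)) * b = a + 1 by field; rewrite b_neq0.
  lra.
have c_gt0 : 0 < c by rewrite lt_neqAle eq_sym c_neq0.
have := quad_ge0 (b / c).
have -> : a - 2 * (b / c) * b + (b / c) ^+ 2 * c = a - b ^+ 2 / c by field.
by rewrite subr_ge0 ler_pdivrMr.
Qed.

Section LinearMaps.
Variables (K : comPzRingType) (U W : lmodType K).
Implicit Types (a : K) (S T : U -> W).

Lemma linear_opD T : linear T -> forall x y, T (x + y) = T x + T y.
Proof. by move=> linT x y; rewrite -[x]scale1r linT !scale1r. Qed.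

Lemma linear_opB T : linear T -> forall x y, T (x - y) = T x - T y.
Proof. exact: zmod_morphism_linear. Qed.

Lemma linear_opZ T : linear T -> forall a x, T (a *: x) = a *: T x.
Proof. exact: scalable_linear. Qed.

Lemma linear_scale a T : linear T -> linear (fun x => a *: T x).
Proof. by move=> linT b x y; rewrite linT scalerDr !scalerA mulrC. Qed.

Lemma linear_sub a S T : linear S -> linear T -> linear (fun x => a *: S x - T x).
Proof.
move=> linS linT b x y.
by rewrite linS linT scalerDr scalerBr !scalerA (mulrC a b) opprD addrACA.
Qed.

End LinearMaps.

Section InnerProduct.
Variable R : realType.
Local Notation C := R[i].
Variable V : lmodType C.
Variable ip : V -> V -> C.
Hypothesis H : isHilbert ip.
Implicit Types (x y z : V) (a : C).

Lemma ip0l z : ip 0 z = 0.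
Proof.
have := ip_linl H 1 0 0 z; rewrite scale1r addr0 mul1r.
by rewrite -{1}[ip 0 z]addr0 => /addrI <-.
Qed.

Lemma ipDl x y z : ip (x + y) z = ip x z + ip y z.
Proof. by have := ip_linl H 1 x y z; rewrite scale1r mul1r. Qed.

Lemma ipZl a x z : ip (a *: x) z = a * ip x z.
Proof. by have := ip_linl H a x 0 z; rewrite addr0 ip0l addr0. Qed.

Lemma ipNl x z : ip (- x) z = - ip x z.
Proof. by rewrite -scaleN1r ipZl mulN1r. Qed.

Lemma ipBl x y z : ip (x - y) z = ip x z - ip y z.
Proof. by rewrite ipDl ipNl. Qed.

Lemma ipDr x y z : ip z (x + y) = ip z x + ip z y.
Proof. by rewrite ip_conj // ipDl rmorphD /= -!(ip_conj H). Qed.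

Lemma ipZr a x z : ip z (a *: x) = a^* * ip z x.
Proof. by rewrite ip_conj // ipZl rmorphM /= -!(ip_conj H). Qed.

Lemma ipBr x y z : ip z (x - y) = ip z x - ip z y.
Proof. by rewrite ip_conj // ipBl rmorphB /= -!(ip_conj H). Qed.

Lemma Re_ipC x y : Re (ip y x) = Re (ip x y).
Proof. by rewrite (ip_conj H) ReJ. Qed.

(* Real-valued counterparts of [hnorm], which takes values in [R[i]]. *)
Definition sqnorm x : R := Re (ip x x).
Definition rnorm x : R := Num.sqrt (sqnorm x).

Lemma Im_ipxx x : Im (ip x x) = 0.
Proof. by have /cge0P[] := ip_ge0 H x. Qed.

Lemma sqnorm_ge0 x : 0 <= sqnorm x.
Proof. by have /cge0P[] := ip_ge0 H x. Qed.

Lemma ipxxE x : ip x x = (sqnorm x)%:C%C.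
Proof. by apply: eq_ReIm; rewrite //= Im_ipxx. Qed.

Lemma sqnorm_eq0 x : sqnorm x = 0 -> x = 0.
Proof. by move=> x0; apply: (ip_def H); rewrite ipxxE x0. Qed.

Lemma rnorm0 : rnorm 0 = 0.
Proof. by rewrite /rnorm /sqnorm ip0l sqrtr0. Qed.

Lemma rnorm_ge0 x : 0 <= rnorm x. Proof. exact: sqrtr_ge0. Qed.

Lemma rnorm_sqr x : rnorm x ^+ 2 = sqnorm x.
Proof. by rewrite sqr_sqrtr // sqnorm_ge0. Qed.

Lemma rnorm_eq0 x : rnorm x = 0 -> x = 0.
Proof. by move=> x0; apply: sqnorm_eq0; rewrite -rnorm_sqr x0 expr0n. Qed.

Lemma hnormE x : hnorm ip x = (rnorm x)%:C%C.
Proof.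
by rewrite /hnorm ipxxE -rnorm_sqr rmorphXn /= sqrCK // ler0c rnorm_ge0.
Qed.

Lemma sqnormD x y : sqnorm (x + y) = sqnorm x + 2 * Re (ip x y) + sqnorm y.
Proof. rewrite /sqnorm !ipDl !ipDr !ReD (Re_ipC y x); lra. Qed.

Lemma sqnormZ a x : sqnorm (a *: x) = (Re a ^+ 2 + Im a ^+ 2) * sqnorm x.
Proof. rewrite /sqnorm ipZl ipZr !ReM !ImM ReJ ImJ Im_ipxx; lra. Qed.

Lemma rnormZ a x : rnorm (a *: x) = Num.sqrt (Re a ^+ 2 + Im a ^+ 2) * rnorm x.
Proof. by rewrite /rnorm sqnormZ sqrtrM // addr_ge0 // sqr_ge0. Qed.

Lemma rnormN x : rnorm (- x) = rnorm x.
Proof.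
rewrite -scaleN1r rnormZ -[RHS]mul1r -sqrtr1; congr (Num.sqrt _ * _) => /=; ring.
Qed.

Lemma rnormB x y : rnorm (x - y) = rnorm (y - x).
Proof. by rewrite -rnormN opprB. Qed.

End InnerProduct.

Section PositiveOperators.
Variable R : realType.
Local Notation C := R[i].
Variable V : lmodType C.
Variable ip : V -> V -> C.
Hypothesis H : isHilbert ip.
Implicit Types x y z : V.

Variable T : V -> V.
Hypotheses (linT : linear T) (posT : pos_op ip T).

Lemma pos_herm x y : ip (T y) x = (ip (T x) y)^*.
Proof.
(* Polarization: the form of [T] is real at [x + y] and at [x + i y]. *)
have /cge0P[Im_x _] := posT x; have /cge0P[Im_y _] := posT y.
have /cge0P[Im_xy _] := posT (x + y).
have /cge0P[Im_xiy _] := posT (x + (0 +i* 1)%C *: y).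
rewrite !(linear_opD linT) (ipDl H) !(ipDr H) !ImD Im_x Im_y in Im_xy.
rewrite !(linear_opD linT) !(linear_opZ linT) (ipDl H) !(ipDr H) !(ipZl H) !(ipZr H) in Im_xiy.
rewrite !ImD !ImM !ReM !ImJ !ReJ Im_x Im_y /= in Im_xiy.
apply: eq_ReIm; rewrite ?ReJ ?ImJ; lra.
Qed.

Lemma pos_adjoint x y : ip x (T y) = ip (T x) y.
Proof. by rewrite (ip_conj H) pos_herm conjCK. Qed.

Lemma pos_CauchySchwarz x z :
  Re (ip (T x) z) ^+ 2 <= Re (ip (T x) x) * Re (ip (T z) z).
Proof.
apply: sqr_le_of_quad_ge0; first by have /cge0P[] := posT z.
move=> t; have /cge0P[_] := posT (x + (- t)%:C%C *: z).
rewrite !(linear_opD linT) !(linear_opZ linT) (ipDl H) !(ipDr H) !(ipZl H) !(ipZr H).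
rewrite !ReD !ReM !ImJ !ReJ /=.
have /cge0P[-> _] := posT z.
rewrite -(Re_ipC H (T z)) pos_adjoint; lra.
Qed.

End PositiveOperators.

Section Norm.
Variable R : realType.
Variable V : lmodType R[i].
Variable ip : V -> V -> R[i].
Hypothesis H : isHilbert ip.
Implicit Types (x y z : V).

Lemma Re_ip_le_rnorm x z : Re (ip x z) <= rnorm ip x * rnorm ip z.
Proof.
have := pos_CauchySchwarz H (T := id) (fun _ _ _ => erefl) (ip_ge0 H) x z.
rewrite -/(sqnorm ip x) -/(sqnorm ip z) -!(rnorm_sqr H) -exprMn.
have := mulr_ge0 (rnorm_ge0 ip x) (rnorm_ge0 ip z); nra.
Qed.

Lemma rnormD x y : rnorm ip (x + y) <= rnorm ip x + rnorm ip y.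
Proof.
have := Re_ip_le_rnorm x y; have := sqnormD H x y; rewrite -!(rnorm_sqr H).
have := rnorm_ge0 ip x; have := rnorm_ge0 ip y; have := rnorm_ge0 ip (x + y); nra.
Qed.

End Norm.

Section BoundedOperators.
Variable R : realType.
Local Notation C := R[i].
Variable V : lmodType C.
Variable ip : V -> V -> C.
Hypothesis H : isHilbert ip.
Implicit Types (a : C) (S T : V -> V).

Lemma bounded_opP T : bounded_op ip T ->
  linear T /\ exists2 K : R, 0 < K & forall x, rnorm ip (T x) <= K * rnorm ip x.
Proof.
case=> linT [K0 leK0]; split=> //; exists (`|Re K0| + 1) => [|x].
  by have := normr_ge0 (Re K0); lra.
have := leK0 x; rewrite !(hnormE H) lecE => /andP[_] /=.
rewrite ReM /= mulr0 subr0.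
have := ler_norm (Re K0); have := rnorm_ge0 ip x; nra.
Qed.

Lemma bounded_opW T (K : R) :
  linear T -> (forall x, rnorm ip (T x) <= K * rnorm ip x) -> bounded_op ip T.
Proof.
move=> linT leK; split=> //; exists K%:C%C => x.
by rewrite !(hnormE H) -rmorphM lecR.
Qed.

Lemma bounded_id : bounded_op ip id.
Proof. by apply: (@bounded_opW _ 1) => // x; rewrite mul1r. Qed.

Lemma bounded_scale a T : bounded_op ip T -> bounded_op ip (fun x => a *: T x).
Proof.
move=> /bounded_opP[linT [KT _ leKT]].
apply: (@bounded_opW _ (Num.sqrt (Re a ^+ 2 + Im a ^+ 2) * KT)).
  exact: linear_scale.
by move=> x; rewrite (rnormZ H) -mulrA ler_wpM2l ?sqrtr_ge0.
Qed.

Lemma bounded_sub a S T : bounded_op ip S -> bounded_op ip T ->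
  bounded_op ip (fun x => a *: S x - T x).
Proof.
move=> /bounded_opP[linS [KS _ leKS]] /bounded_opP[linT [KT _ leKT]].
apply: (@bounded_opW _ (Num.sqrt (Re a ^+ 2 + Im a ^+ 2) * KS + KT)).
  exact: linear_sub.
move=> x; apply: le_trans (rnormD H _ _) _; rewrite (rnormN H) (rnormZ H) mulrDl -mulrA.
by apply: lerD => //; apply: ler_wpM2l => //; apply: sqrtr_ge0.
Qed.

Lemma bounded_comp S T : bounded_op ip S -> bounded_op ip T ->
  bounded_op ip (fun x => S (T x)).
Proof.
move=> /bounded_opP[linS [KS KS_gt0 leKS]] /bounded_opP[linT [KT _ leKT]].
apply: (@bounded_opW _ (KS * KT)) => [a x y|x]; first by rewrite linT linS.
by apply: le_trans (leKS _) _; rewrite -mulrA ler_wpM2l // ltW.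
Qed.

End BoundedOperators.

Section Contraction.
Variable R : realType.
Variable V : lmodType R[i].
Variable ip : V -> V -> R[i].
Hypothesis H : isHilbert ip.
Variables (F : V -> V) (r : R).
Hypotheses (r_ge0 : 0 <= r) (r_lt1 : r < 1).
Hypothesis contrF : forall x y, rnorm ip (F x - F y) <= r * rnorm ip (x - y).

Local Notation u n := (iter n F 0).
Local Notation d := (rnorm ip (u 1 - u 0)).

Lemma iter_step_le n : rnorm ip (u n.+1 - u n) <= r ^+ n * d.
Proof.
elim: n => [|n IHn]; first by rewrite expr0 mul1r.
rewrite !iterS; apply: le_trans (contrF _ _) _.
by rewrite exprS -mulrA ler_wpM2l.
Qed.

Lemma iter_dist_le k n : (1 - r) * rnorm ip (u k - u n) <= (r ^+ k + r ^+ n) * d.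
Proof.
have split_ukn : u k - u n = (u k - u k.+1) + ((u k.+1 - u n.+1) + (u n.+1 - u n)).
  by rewrite !addrA !subrK.
have := rnormD H (u k - u k.+1) ((u k.+1 - u n.+1) + (u n.+1 - u n)).
rewrite -split_ukn.
have := rnormD H (u k.+1 - u n.+1) (u n.+1 - u n).
have := iter_step_le k; rewrite (rnormB H).
have := iter_step_le n.
have : rnorm ip (u k.+1 - u n.+1) <= r * rnorm ip (u k - u n) by apply: contrF.
have := rnorm_ge0 ip (u k - u n); nra.
Qed.

Lemma iter_cauchy (e : R[i]) : 0 < e -> exists N, forall n k,
  (N <= n)%N -> (N <= k)%N -> hnorm ip (u n - u k) < e.
Proof.
rewrite ltcE /= => /andP[/eqP Im_e Re_e_gt0].
have d_ge0 : 0 <= d := rnorm_ge0 ip _.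
have d1_gt0 : 0 < 2 * d + 1 by rewrite ltr_wpDl ?mulr_ge0.
have [N rN_lt] : exists N, r ^+ N < Re e * (1 - r) / (2 * d + 1).
  by apply: exprn_lt_eps; rewrite ?divr_gt0 ?mulr_gt0 ?subr_gt0.
rewrite ltr_pdivlMr // in rN_lt.
exists N => n k le_Nn le_Nk; rewrite (hnormE H) ltcE /= Im_e eqxx /=.
have : (1 - r) * rnorm ip (u n - u k) < (1 - r) * Re e.
  apply: le_lt_trans (iter_dist_le n k) _; rewrite [_ * Re e]mulrC.
  apply: le_lt_trans rN_lt.
  have := ler_wpM2r d_ge0 (lerD (ler_wiXn2l r_ge0 (ltW r_lt1) le_Nn)
                                 (ler_wiXn2l r_ge0 (ltW r_lt1) le_Nk)).
  have := exprn_ge0 N r_ge0; nra.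
by rewrite ltr_pM2l // subr_gt0.
Qed.

Lemma contraction_fixpoint : exists l, F l = l.
Proof.
have [l lim_l] := ip_complete H iter_cauchy.
exists l; apply/eqP; rewrite -subr_eq0; apply/eqP/(rnorm_eq0 H)/eqP.
rewrite eq_le rnorm_ge0 andbT leNgt; apply/negP => dist_gt0.
have [|N near_l] := lim_l (rnorm ip (F l - l) / 3)%:C%C.
  by rewrite ltcR divr_gt0.
have near_uN : rnorm ip (u N - l) < rnorm ip (F l - l) / 3.
  by have := near_l N (leqnn N); rewrite (hnormE H) ltcR.
have near_FuN : rnorm ip (F (u N) - l) < rnorm ip (F l - l) / 3.
  by have := near_l N.+1 (leqnSn N); rewrite (hnormE H) ltcR iterS.
have := rnormD H (F l - F (u N)) (F (u N) - l); rewrite addrA subrK.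
have := contrF l (u N); rewrite (rnormB H l).
have := ler_piMl (rnorm_ge0 ip (u N - l)) (ltW r_lt1); lra.
Qed.

End Contraction.

Section LoewnerOrder.
Variable R : realType.
Variable V : lmodType R[i].
Variable ip : V -> V -> R[i].
Hypothesis H : isHilbert ip.
Implicit Types (S T U : V -> V) (c : R).

Lemma loewner_trans S T U :
  loewner_le ip S T -> loewner_le ip T U -> loewner_le ip S U.
Proof.
move=> leST leTU x; have := addr_ge0 (leST x) (leTU x).
by rewrite -(ipDl H) addrC addrA subrK.
Qed.

Lemma loewner_pos S T : pos_op ip S -> loewner_le ip S T -> pos_op ip T.
Proof.
by move=> posS leST x; have := addr_ge0 (leST x) (posS x); rewrite -(ipDl H) subrK.
Qed.

Lemma pos_op_scale c T : 0 <= c -> pos_op ip T -> pos_op ip (op_scale (cR c) T).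
Proof. by move=> c_ge0 posT x; rewrite (ipZl H) mulr_ge0 // ler0c. Qed.

Lemma loewner_scale_id_Re c T : loewner_le ip (op_scale (cR c) id) T ->
  forall x, c * sqnorm ip x <= Re (ip (T x) x).
Proof.
move=> leT x; have /cge0P[_] := leT x.
by rewrite (ipBl H) (ipZl H) ReB Re_realM subr_ge0.
Qed.

Lemma loewner_scale_idW c T : pos_op ip T ->
  (forall x, c * sqnorm ip x <= Re (ip (T x) x)) -> loewner_le ip (op_scale (cR c) id) T.
Proof.
move=> posT leT x; have /cge0P[Im_T _] := posT x.
apply/cge0P; rewrite (ipBl H) (ipZl H) ReB ImB Re_realM Im_realM Im_T Im_ipxx //.
by split; [rewrite mulr0 subrr | rewrite subr_ge0; apply: leT].
Qed.

End LoewnerOrder.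

Section CoerciveInverse.
Variable R : realType.
Local Notation C := R[i].
Variable V : lmodType C.
Variable ip : V -> V -> C.
Hypothesis H : isHilbert ip.
Variables (T : V -> V) (c : R).
Hypotheses (bT : bounded_op ip T) (c_gt0 : 0 < c).
Hypothesis coerT : loewner_le ip (op_scale (cR c) id) T.

Lemma coercive_rnorm x : c * rnorm ip x <= rnorm ip (T x).
Proof.
have [->|x_neq0] := eqVneq x 0; first by rewrite (rnorm0 H) mulr0 rnorm_ge0.
have x_gt0 : 0 < rnorm ip x.
  by rewrite lt_def rnorm_ge0 andbT; apply: contraNneq x_neq0 => /(rnorm_eq0 H) ->.
rewrite -(ler_pM2r x_gt0); apply: le_trans (Re_ip_le_rnorm H (T x) x).
by rewrite -mulrA -expr2 (rnorm_sqr H) loewner_scale_id_Re.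
Qed.

Lemma coercive_inj x y : T x = T y -> x = y.
Proof.
move=> eqT; apply/eqP; rewrite -subr_eq0; apply/eqP/(rnorm_eq0 H).
apply/le_anti; rewrite rnorm_ge0 andbT -(pmulr_rle0 _ c_gt0).
by have := coercive_rnorm (x - y); rewrite (linear_opB bT.1) eqT subrr (rnorm0 H).
Qed.

Lemma coercive_step (L t : R) : (forall x, rnorm ip (T x) <= L * rnorm ip x) ->
  0 <= t -> t * L ^+ 2 <= c ->
  forall e, sqnorm ip (e - t%:C%C *: T e) <= (1 - t * c) * sqnorm ip e.
Proof.
move=> leL t_ge0 tL_le e.
have leTe : sqnorm ip (T e) <= L ^+ 2 * sqnorm ip e.
  rewrite -!(rnorm_sqr H) -exprMn !expr2.
  by apply: ler_pM; rewrite ?rnorm_ge0 ?leL.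
have := ler_wpM2l t_ge0 (loewner_scale_id_Re H coerT e).
have := ler_wpM2l (sqr_ge0 t) leTe.
have := ler_wpM2r (sqnorm_ge0 H e) (ler_wpM2l t_ge0 tL_le).
rewrite -scaleNr (sqnormD H) (sqnormZ H) (ipZr H) ReM ReJ ImJ /= (Re_ipC H e).
lra.
Qed.

(* [T w = b] is the fixed point of [w |-> w + t (b - T w)], a contraction of
   rate [sqrt (1 - t c)] for [t = c / (c^2 + L^2)]. *)
Lemma coercive_surj b : exists w, T w = b.
Proof.
have [linT [L L_gt0 leL]] := bounded_opP H bT.
have s_gt0 : 0 < c ^+ 2 + L ^+ 2 by rewrite ltr_wpDr ?sqr_ge0 ?exprn_gt0.
pose t := c / (c ^+ 2 + L ^+ 2).
have t_gt0 : 0 < t by rewrite divr_gt0.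
have tc_lt1 : t * c < 1.
  by rewrite /t mulrAC -expr2 ltr_pdivrMr // mul1r ltrDl exprn_gt0.
have tL_le : t * L ^+ 2 <= c.
  by rewrite /t mulrAC ler_pdivrMr // ler_pM2l // lerDr sqr_ge0.
pose F w := w + t%:C%C *: (b - T w).
have contrF a a' : rnorm ip (F a - F a') <= Num.sqrt (1 - t * c) * rnorm ip (a - a').
  have -> : F a - F a' = (a - a') - t%:C%C *: T (a - a').
    rewrite /F (linear_opB linT) !scalerBr opprD addrACA; congr (_ + _).
    by rewrite opprB addrC addrA subrK opprB.
  rewrite /rnorm -sqrtrM; last by rewrite subr_ge0 ltW.
  rewrite ler_sqrt; first exact: coercive_step leL (ltW t_gt0) tL_le _.
  by rewrite mulr_ge0 ?(sqnorm_ge0 H) // subr_ge0 ltW.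
have rate_lt1 : Num.sqrt (1 - t * c) < 1.
  suff : Num.sqrt (1 - t * c) < Num.sqrt 1 by rewrite sqrtr1.
  by rewrite ltr_sqrt // gtrBl mulr_gt0.
have [l Fl] := contraction_fixpoint H (sqrtr_ge0 _) rate_lt1 contrF.
exists l; have /eqP : t%:C%C *: (b - T l) = 0 by apply: (addrI l); rewrite addr0.
by rewrite scaler_eq0 fmorph_eq0 gt_eqF //= subr_eq0 => /eqP <-.
Qed.

Lemma coercive_invertible : exists D, is_inverse ip T D.
Proof.
pose D b := proj1_sig (cid (coercive_surj b)).
have TD b : T (D b) = b by rewrite /D; case: cid.
have linT := bT.1.
exists D; split; last by split=> // x; apply: coercive_inj; rewrite TD.
apply: (bounded_opW H (K := c^-1)) => [a x y|x].
  by apply: coercive_inj; rewrite linT !TD.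
by rewrite ler_pdivlMl //; have := coercive_rnorm (D x); rewrite TD.
Qed.

End CoerciveInverse.

Section OperatorInequalities.
Variable R : realType.
Local Notation C := R[i].
Variable V : lmodType C.
Variable ip : V -> V -> C.
Hypothesis H : isHilbert ip.
Implicit Types (A P X Y : V -> V).

Lemma pos_inverse A Ainv : pos_op ip A -> (forall x, A (Ainv x) = x) -> pos_op ip Ainv.
Proof. by move=> posA AAinv x; rewrite -{2}(AAinv x) (ip_conj H) conjC_ge0. Qed.

Lemma pos_inverse_coercive A Ainv : pos_op ip A -> is_inverse ip A Ainv ->
  exists2 c : R, 0 < c & loewner_le ip (op_scale (cR c) id) A.
Proof.
move=> posA [bAinv [AAinv AinvA]].
have [linAinv [K K_gt0 leK]] := bounded_opP H bAinv.
exists K^-1; first by rewrite invr_gt0.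
apply: loewner_scale_idW => // x.
have := pos_CauchySchwarz H linAinv (pos_inverse posA AAinv) (A x) x.
rewrite AinvA (Re_ipC H (A x)) -/(sqnorm ip x).
have : Re (ip (Ainv x) x) <= K * sqnorm ip x.
  apply: le_trans (Re_ip_le_rnorm H _ _) _.
  by rewrite -(rnorm_sqr H) expr2 mulrA ler_wpM2r ?rnorm_ge0.
have /cge0P[_ Ax_ge0] := posA x; move=> le_Ainv cs.
have [->|x_neq0] := eqVneq (sqnorm ip x) 0; first by rewrite mulr0.
have x_gt0 : 0 < sqnorm ip x by rewrite lt_def x_neq0 sqnorm_ge0.
rewrite -(ler_pM2r x_gt0) -mulrA -expr2 ler_pdivrMl //.
by apply: le_trans cs _; rewrite mulrCA ler_wpM2l.
Qed.

(* With [z = A^-1 (P x)], the form of [P A^-1 P] at [x] is [<A z, z>], and Cauchy-Schwarz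
   for [P] gives [<A z, z>^2 <= <P x, x> <P z, z> <= c <P x, x> <A z, z>]. *)
Lemma inv_sandwich_le P A Ainv (c : R) : 0 <= c -> linear P -> pos_op ip P ->
  pos_op ip A -> (forall x, A (Ainv x) = x) ->
  loewner_le ip P (op_scale (cR c) A) ->
  loewner_le ip (fun x => P (Ainv (P x))) (op_scale (cR c) P).
Proof.
move=> c_ge0 linP posP posA AAinv leP x.
set z := Ainv (P x).
have Az : A z = P x := AAinv _.
have Pzx : ip (P z) x = ip (A z) z.
  rewrite -(pos_adjoint H linP posP) -Az (ip_conj H) conj_Creal //.
  exact: ger0_real.
apply/cge0P; rewrite (ipBl H) (ipZl H) Pzx ReB ImB Re_realM Im_realM.
have /cge0P[-> Px_ge0] := posP x; have /cge0P[-> tau_ge0] := posA z.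
split; first by rewrite mulr0 subrr.
have cs := pos_CauchySchwarz H linP posP x z; rewrite -{1}Az in cs.
have /cge0P[_] := leP z; rewrite (ipBl H) (ipZl H) ReB Re_realM subr_ge0 => Pz_le.
rewrite subr_ge0.
have [->|tau_neq0] := eqVneq (Re (ip (A z) z)) 0; first by rewrite mulr_ge0.
have tau_gt0 : 0 < Re (ip (A z) z) by rewrite lt_def tau_neq0.
rewrite -(ler_pM2l tau_gt0) -expr2 [_ * (c * _)]mulrC -mulrA mulrCA.
exact: le_trans cs (ler_wpM2l Px_ge0 Pz_le).
Qed.

(* With [P = M A - B]: [(M + m) B - M m A - B A^-1 B = (M - m) P - P A^-1 P]. *)
Lemma inv_sandwich_bound A B Ainv (m M : R) : m <= M ->
  linear A -> linear B -> pos_op ip A ->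
  linear Ainv -> (forall x, A (Ainv x) = x) -> (forall x, Ainv (A x) = x) ->
  loewner_le ip (op_scale (cR m) A) B -> loewner_le ip B (op_scale (cR M) A) ->
  loewner_le ip (fun x => B (Ainv (B x)))
    (fun x => cR (M + m) *: B x - cR (M * m) *: A x).
Proof.
move=> le_mM linA linB posA linAinv AAinv AinvA leAB leBA x.
(* [P] is kept opaque, so that rewriting [B] into [M A - P] terminates. *)
have [P PE] : exists P, forall y, P y = cR M *: A y - B y.
  by exists (fun y => cR M *: A y - B y).
have linP : linear P by move=> a y z; rewrite !PE; apply: linear_sub.
have posP : pos_op ip P by move=> y; rewrite PE; apply: leBA.
have leP : loewner_le ip P (op_scale (cR (M - m)) A).
  move=> y; have := leAB y; congr (0 <= _).
  by rewrite PE !(ipBl H) !(ipZl H) /cR rmorphB /=; ring.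
have BE y : B y = cR M *: A y - P y by rewrite PE subKr.
have Mm_ge0 : 0 <= M - m by rewrite subr_ge0.
rewrite [X in 0 <= X](_ : _ = ip (cR (M - m) *: P x - P (Ainv (P x))) x).
  exact: inv_sandwich_le Mm_ge0 linP posP posA AAinv leP x.
rewrite [in Ainv (B x)]BE (linear_opB linAinv) (linear_opZ linAinv) AinvA.
rewrite (linear_opB linB) (linear_opZ linB).
rewrite !BE AAinv !(ipBl H, ipZl H) /cR !rmorphB !rmorphD !rmorphM /=; ring.
Qed.

Lemma inv_sandwich_ge X Y D (s : R) : linear X -> pos_op ip X ->
  linear Y -> pos_op ip Y -> is_inverse ip Y D ->
  loewner_le ip (fun y => cR (2 * s) *: X y - cR (s ^+ 2) *: Y y)
    (fun y => X (D (X y))).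
Proof.
move=> linX posX linY posY [[linD _] [YD DY]] y.
(* The form of [(X - s Y) Y^-1 (X - s Y) = X Y^-1 X - 2 s X + s^2 Y] at [y] is [<D u, u>]. *)
set u := X y - cR s *: Y y.
have := pos_inverse posY YD u; congr (0 <= _).
rewrite {2}/u (ipBr H) (ipZr H) (pos_adjoint H linX posX) (pos_adjoint H linY posY) YD.
rewrite /u (linear_opB linD) (linear_opZ linD) DY (linear_opB linX) (linear_opZ linX).
rewrite !(ipBl H, ipZl H) /cR conj_realC rmorphM rmorphXn /=; ring.
Qed.

Lemma kantorovich_constE (m M : R) : 0 < m -> 0 < M ->
  ((M + m) / (2 * Num.sqrt (M * m))) ^+ 2 = (M + m) ^+ 2 / (4 * (M * m)).
Proof.
by move=> m_gt0 M_gt0; rewrite expr_div_n exprMn sqr_sqrtr ?mulr_ge0 ?ltW // -natrX.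
Qed.

Lemma kantorovich_bound X Y D (m M : R) : 0 < m -> 0 < M ->
  linear X -> pos_op ip X -> linear Y -> pos_op ip Y -> is_inverse ip Y D ->
  loewner_le ip (fun y => cR (M + m) *: X y - cR (M * m) *: Y y)
    (op_scale (cR (((M + m) / (2 * Num.sqrt (M * m))) ^+ 2)) (fun y => X (D (X y)))).
Proof.
move=> m_gt0 M_gt0 linX posX linY posY invD y.
(* [s] is chosen so that [k * (2 * s) = M + m] and [k * s^2 = M * m]. *)
rewrite kantorovich_constE //; set k := _ / _; pose s := 2 * (M * m) / (M + m).
have MDm_neq0 : M + m != 0 by rewrite gt_eqF ?addr_gt0.
have k_ge0 : 0 <= k by rewrite ltW // divr_gt0 ?exprn_gt0 ?addr_gt0 ?mulr_gt0.
have MDmE : M + m = k * (2 * s) by rewrite /k /s; field; rewrite MDm_neq0 !gt_eqF.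
have MmE : M * m = k * s ^+ 2 by rewrite /k /s; field; rewrite MDm_neq0 !gt_eqF.
have kC_ge0 : 0 <= cR k by rewrite ler0c.
have := mulr_ge0 kC_ge0 (inv_sandwich_ge s linX posX linY posY invD y).
clearbody k s; congr (0 <= _).
by rewrite MDmE MmE !(ipBl H, ipZl H) /cR !rmorphM; ring.
Qed.

End OperatorInequalities.

Section PositiveMap.
Variable R : realType.
Variables V W : lmodType R[i].
Variables (ipV : V -> V -> R[i]) (ipW : W -> W -> R[i]).
Hypothesis HV : isHilbert ipV.
Variable Phi : (V -> V) -> (W -> W).
Hypothesis hPhi : unital_pos_linear ipV ipW Phi.
Implicit Types (a : R[i]) (S T : V -> V).

Lemma pos_map_scale a T : bounded_op ipV T ->
  Phi (fun x => a *: T x) = (fun y => a *: Phi T y).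
Proof.
move=> bT; have [_ [Phi_lin _]] := hPhi.
have -> : (fun x => a *: T x) = (fun x => (a - 1) *: T x + T x).
  by apply: funext => x; rewrite scalerBl scale1r subrK.
rewrite Phi_lin //.
by apply: funext => y; rewrite scalerBl scale1r subrK.
Qed.

Lemma pos_map_sub a S T : bounded_op ipV S -> bounded_op ipV T ->
  Phi (fun x => a *: S x - T x) = (fun y => a *: Phi S y - Phi T y).
Proof.
move=> bS bT; have [_ [Phi_lin _]] := hPhi.
have -> : (fun x => a *: S x - T x) = (fun x => a *: S x + (-1) *: T x).
  by apply: funext => x; rewrite scaleN1r.
rewrite Phi_lin ?pos_map_scale //; last exact: (bounded_scale HV).
by apply: funext => y; rewrite scaleN1r.
Qed.

Lemma pos_map_monotone S T : bounded_op ipV S -> bounded_op ipV T ->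
  loewner_le ipV S T -> loewner_le ipW (Phi S) (Phi T).
Proof.
move=> bS bT leST; have [_ [_ [Phi_pos _]]] := hPhi.
have E : (fun x => 1 *: T x - S x) = (fun x => T x - S x).
  by apply: funext => x; rewrite scale1r.
have := Phi_pos _ (bounded_sub HV 1 bT bS); rewrite pos_map_sub // E => /(_ leST).
by move=> posPhi y; have := posPhi y; rewrite scale1r.
Qed.

Lemma pos_map_coercive (c : R) A : bounded_op ipV A ->
  loewner_le ipV (op_scale (cR c) id) A -> loewner_le ipW (op_scale (cR c) id) (Phi A).
Proof.
move=> bA leA; have [_ [_ [_ Phi_id]]] := hPhi.
have := pos_map_monotone (bounded_scale HV (cR c) (bounded_id HV)) bA leA.
by rewrite /op_scale (pos_map_scale _ (bounded_id HV)) Phi_id.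
Qed.

End PositiveMap.

Theorem mainTheorem3 (R : realType) (V W : lmodType R[i])
    (ipV : V -> V -> R[i]) (ipW : W -> W -> R[i])
    (hV : isHilbert ipV) (hW : isHilbert ipW)
    (Phi : (V -> V) -> (W -> W)) (hPhi : unital_pos_linear ipV ipW Phi)
    (A B Ainv : V -> V) (m M : R)
    (hA : bounded_op ipV A) (hApos : pos_op ipV A) (hAinv : is_inverse ipV A Ainv)
    (hB : bounded_op ipV B)
    (hm : 0 < m) (hmM : m < M)
    (hmB : loewner_le ipV (op_scale (cR m) A) B)
    (hBM : loewner_le ipV B (op_scale (cR M) A)) :
  (exists D, is_inverse ipW (Phi A) D) /\
  forall D : W -> W, is_inverse ipW (Phi A) D ->
    loewner_le ipW (Phi (fun x => B (Ainv (B x))))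
      (op_scale (cR (((M + m) / (2 * Num.sqrt (M * m))) ^+ 2))
         (fun y => Phi B (D (Phi B y)))).
Proof.
have [Phi_bnd [_ [Phi_pos _]]] := hPhi.
have [c c_gt0 leA] := pos_inverse_coercive hV hApos hAinv.
have lePhiA := pos_map_coercive hV hPhi hA leA.
split; first exact: (coercive_invertible hW (Phi_bnd A hA) c_gt0 lePhiA).
move=> D hD; have [bAinv [AAinv AinvA]] := hAinv.
have posB : pos_op ipV B := loewner_pos hV (pos_op_scale hV (ltW hm) hApos) hmB.
have bMmA := bounded_scale hV (cR (M * m)) hA.
have leBAB := inv_sandwich_bound hV (ltW hmM) hA.1 hB.1 hApos bAinv.1 AAinv AinvA hmB hBM.
apply: (loewner_trans hW (pos_map_monotone hV hPhi _ (bounded_sub hV _ hB bMmA) leBAB)).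
  exact: (bounded_comp hV hB (bounded_comp hV bAinv hB)).
rewrite (pos_map_sub hV hPhi _ hB bMmA) (pos_map_scale hPhi _ hA).
exact: (kantorovich_bound hW hm (lt_trans hm hmM) (Phi_bnd B hB).1 (Phi_pos B hB posB)
                          (Phi_bnd A hA).1 (Phi_pos A hA hApos) hD).
Qed.
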